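(* In the While-language extended with non-deterministic input, for every command $c$ and store $\sigma$: $(c,\sigma)\to^\infty$ if and only if for every store $\sigma'$, $(c,\sigma,\Downarrow)\Rightarrow^{co}_G\sigma',\Uparrow$.
   Context: Extended While-language syntax: variables $x$ range over a countably infinite set $\mathit{Var}$; $n$ ranges over natural numbers; values are $v ::= \mathsf{null}\mid n$ ($\mathsf{null}$ distinct from every natural number); expressions are $e ::= v\mid x\mid e_1\oplus e_2\mid\mathsf{input}$ with $\oplus\in\{+,-,*\}$, where $\oplus(n_1,n_2)$ is the result of the operation on naturals; commands are $c ::= \mathsf{skip}\mid\mathsf{alloc}\ x\mid x:=e\mid c_1;c_2\mid \mathsf{if}\ e\ c_1\ c_2\mid\mathsf{while}\ e\ c$. A store $\sigma$ is a finite partial map from $\mathit{Var}$ to values, with domain $\mathrm{dom}(\sigma)$, lookup $\sigma(x)$, update $\sigma[x\mapsto v]$. Expression evaluation $(e,\sigma)\Rightarrow_E v$ is the least relation with: $(v,\sigma)\Rightarrow_E v$; $(x,\sigma)\Rightarrow_E\sigma(x)$ if $x\in\mathrm{dom}(\sigma)$; if $(e_1,\sigma)\Rightarrow_E n_1$ and $(e_2,\sigma)\Rightarrow_E n_2$ with $n_1,n_2$ naturals then $(e_1\oplus e_2,\sigma)\Rightarrow_E\oplus(n_1,n_2)$; and $(\mathsf{input},\sigma)\Rightarrow_E v$ for every value $v$. Small-step relation $(c,\sigma)\to(c',\sigma')$ is the least relation with: $(\mathsf{alloc}\ x,\sigma)\to(\mathsf{skip},\sigma[x\mapsto\mathsf{null}])$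 if $x\notin\mathrm{dom}(\sigma)$; $(x:=e,\sigma)\to(\mathsf{skip},\sigma[x\mapsto v])$ if $x\in\mathrm{dom}(\sigma)$ and $(e,\sigma)\Rightarrow_E v$; $(c_1;c_2,\sigma)\to(c_1';c_2,\sigma')$ if $(c_1,\sigma)\to(c_1',\sigma')$; $(\mathsf{skip};c_2,\sigma)\to(c_2,\sigma)$; $(\mathsf{if}\ e\ c_1\ c_2,\sigma)\to(c_1,\sigma)$ if $(e,\sigma)\Rightarrow_E v$, $v\neq 0$; $(\mathsf{if}\ e\ c_1\ c_2,\sigma)\to(c_2,\sigma)$ if $(e,\sigma)\Rightarrow_E 0$; $(\mathsf{while}\ e\ c,\sigma)\to(c;\mathsf{while}\ e\ c,\sigma)$ if $(e,\sigma)\Rightarrow_E v$, $v\neq0$; $(\mathsf{while}\ e\ c,\sigma)\to(\mathsf{skip},\sigma)$ if $(e,\sigma)\Rightarrow_E 0$. The predicate $(c,\sigma)\to^\infty$ is coinductively defined (greatest predicate) by: if $(c,\sigma)\to(c',\sigma')$ and $(c',\sigma')\to^\infty$ then $(c,\sigma)\to^\infty$. Flag-based big-step semantics: status flags $\delta ::= \Downarrow\mid\Uparrow$. Expression evaluation $(e,\sigma,\delta)\Rightarrow_{GE}v,\delta'$ is the least relation with: $(v,\sigma,\Downarrow)\Rightarrow_{GE}v,\Downarrow$; $(x,\sigma,\Downarrow)\Rightarrow_{GE}\sigma(x),\Downarrow$ if $x\in\mathrm{dom}(\sigma)$; if $(e_1,\sigma,\Downarrow)\Rightarrow_{GE}n_1,\delta$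 and $(e_2,\sigma,\delta)\Rightarrow_{GE}n_2,\delta'$ ($n_1,n_2$ naturals) then $(e_1\oplus e_2,\sigma,\Downarrow)\Rightarrow_{GE}\oplus(n_1,n_2),\delta'$; $(\mathsf{input},\sigma,\Downarrow)\Rightarrow_{GE}v,\Downarrow$ for every value $v$; and $(e,\sigma,\Uparrow)\Rightarrow_{GE}v,\Uparrow$ for every value $v$. The command rules for judgments $(c,\sigma,\delta)\Rightarrow_G\sigma',\delta'$ are: $(\mathsf{skip},\sigma,\Downarrow)\Rightarrow_G\sigma,\Downarrow$; $(\mathsf{alloc}\ x,\sigma,\Downarrow)\Rightarrow_G\sigma[x\mapsto\mathsf{null}],\Downarrow$ if $x\notin\mathrm{dom}(\sigma)$; $(x:=e,\sigma,\Downarrow)\Rightarrow_G\sigma[x\mapsto v],\delta$ if $x\in\mathrm{dom}(\sigma)$ and $(e,\sigma,\Downarrow)\Rightarrow_{GE}v,\delta$; $(c_1;c_2,\sigma,\Downarrow)\Rightarrow_G\sigma'',\delta'$ if $(c_1,\sigma,\Downarrow)\Rightarrow_G\sigma',\delta$ and $(c_2,\sigma',\delta)\Rightarrow_G\sigma'',\delta'$; $(\mathsf{if}\ e\ c_1\ c_2,\sigma,\Downarrow)\Rightarrow_G\sigma',\delta'$ if $v\ne0$, $(e,\sigma,\Downarrow)\Rightarrow_{GE}v,\delta$ and $(c_1,\sigma,\delta)\Rightarrow_G\sigma',\delta'$; $(\mathsf{if}\ e\ c_1\ c_2,\sigma,\Downarrow)\Rightarrow_G\sigma',\delta'$ if $(e,\sigma,\Downarrow)\Rightarrow_{GE}0,\delta$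 and $(c_2,\sigma,\delta)\Rightarrow_G\sigma',\delta'$; $(\mathsf{while}\ e\ c,\sigma,\Downarrow)\Rightarrow_G\sigma'',\delta''$ if $(e,\sigma,\Downarrow)\Rightarrow_{GE}v,\delta$, $v\ne0$, $(c,\sigma,\delta)\Rightarrow_G\sigma',\delta'$ and $(\mathsf{while}\ e\ c,\sigma',\delta')\Rightarrow_G\sigma'',\delta''$; $(\mathsf{while}\ e\ c,\sigma,\Downarrow)\Rightarrow_G\sigma,\delta$ if $(e,\sigma,\Downarrow)\Rightarrow_{GE}0,\delta$; $(c,\sigma,\Uparrow)\Rightarrow_G\sigma',\Uparrow$ for every store $\sigma'$. $\Rightarrow^{co}_G$ is the coinductive interpretation of these command rules (greatest relation such that every element is the conclusion of a rule instance whose command premises lie in it). *)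

From HB Require Import structures.
From mathcomp Require Import all_boot.
From mathcomp Require Import finmap.

Set Implicit Arguments.
Unset Strict Implicit.
Unset Printing Implicit Defensive.

Local Open Scope fmap_scope.

Definition var := nat.

Inductive value : Type := VNull | VNat (n : nat).

Definition value_to_opt (v : value) : option nat :=
  match v with VNull => None | VNat n => Some n end.
Definition opt_to_value (o : option nat) : value :=
  match o with None => VNull | Some n => VNat n end.
Lemma value_optK : cancel value_to_opt opt_to_value.
Proof. by case. Qed.
HB.instance Definition _ := Countable.copy value (can_type value_optK).

(** Binary operators on naturals: +, - (truncated), *. *)
Inductive binop : Type := OPlus | OMinus | OMult.

Definition eval_op (o : binop) (n1 n2 : nat) : nat :=
  match o with
  | OPlus => n1 + n2
  | OMinus => n1 - n2
  | OMult => n1 * n2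
  end.

Inductive expr : Type :=
  | EVal (v : value)
  | EVar (x : var)
  | EOp (o : binop) (e1 e2 : expr)
  | EInput.

Inductive cmd : Type :=
  | CSkip
  | CAlloc (x : var)
  | CAssign (x : var) (e : expr)
  | CSeq (c1 c2 : cmd)
  | CIf (e : expr) (c1 c2 : cmd)
  | CWhile (e : expr) (c : cmd).

Definition store := {fmap var -> value}.

Inductive eval_expr : expr -> store -> value -> Prop :=
  | EE_val v s : eval_expr (EVal v) s v
  | EE_var x s (Hx : x \in domf s) : eval_expr (EVar x) s (s.[Hx])
  | EE_op o e1 e2 s n1 n2 :
      eval_expr e1 s (VNat n1) -> eval_expr e2 s (VNat n2) ->
      eval_expr (EOp o e1 e2) s (VNat (eval_op o n1 n2))
  | EE_input s v : eval_expr EInput s v.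

Inductive step : cmd -> store -> cmd -> store -> Prop :=
  | S_alloc x s : x \notin domf s -> step (CAlloc x) s CSkip s.[x <- VNull]
  | S_assign x e s v : x \in domf s -> eval_expr e s v ->
      step (CAssign x e) s CSkip s.[x <- v]
  | S_seq c1 c1' c2 s s' : step c1 s c1' s' -> step (CSeq c1 c2) s (CSeq c1' c2) s'
  | S_seq_skip c2 s : step (CSeq CSkip c2) s c2 s
  | S_if_true e c1 c2 s v : eval_expr e s v -> v <> VNat 0 -> step (CIf e c1 c2) s c1 s
  | S_if_false e c1 c2 s : eval_expr e s (VNat 0) -> step (CIf e c1 c2) s c2 s
  | S_while_true e c s v : eval_expr e s v -> v <> VNat 0 ->
      step (CWhile e c) s (CSeq c (CWhile e c)) s
  | S_while_false e c s : eval_expr e s (VNat 0) -> step (CWhile e c) s CSkip s.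

CoInductive diverges : cmd -> store -> Prop :=
  | Div c s c' s' : step c s c' s' -> diverges c' s' -> diverges c s.

(** Status flags: Conv = ⇓ (normal), Div = ⇑ (diverged). *)
Inductive flag : Type := FConv | FDiv.

Inductive geval_expr : expr -> store -> flag -> value -> flag -> Prop :=
  | GE_val v s : geval_expr (EVal v) s FConv v FConv
  | GE_var x s (Hx : x \in domf s) : geval_expr (EVar x) s FConv (s.[Hx]) FConv
  | GE_op o e1 e2 s n1 n2 d d' :
      geval_expr e1 s FConv (VNat n1) d -> geval_expr e2 s d (VNat n2) d' ->
      geval_expr (EOp o e1 e2) s FConv (VNat (eval_op o n1 n2)) d'
  | GE_input s v : geval_expr EInput s FConv v FConv
  | GE_div e s v : geval_expr e s FDiv v FDiv.

CoInductive cogeval : cmd -> store -> flag -> store -> flag -> Prop :=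
  | G_skip s : cogeval CSkip s FConv s FConv
  | G_alloc x s : x \notin domf s -> cogeval (CAlloc x) s FConv s.[x <- VNull] FConv
  | G_assign x e s v d : x \in domf s -> geval_expr e s FConv v d ->
      cogeval (CAssign x e) s FConv s.[x <- v] d
  | G_seq c1 c2 s s' s'' d d' :
      cogeval c1 s FConv s' d -> cogeval c2 s' d s'' d' ->
      cogeval (CSeq c1 c2) s FConv s'' d'
  | G_if_true e c1 c2 s s' v d d' :
      v <> VNat 0 -> geval_expr e s FConv v d -> cogeval c1 s d s' d' ->
      cogeval (CIf e c1 c2) s FConv s' d'
  | G_if_false e c1 c2 s s' d d' :
      geval_expr e s FConv (VNat 0) d -> cogeval c2 s d s' d' ->
      cogeval (CIf e c1 c2) s FConv s' d'
  | G_while_true e c s s' s'' v d d' d'' :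
      geval_expr e s FConv v d -> v <> VNat 0 -> cogeval c s d s' d' ->
      cogeval (CWhile e c) s' d' s'' d'' ->
      cogeval (CWhile e c) s FConv s'' d''
  | G_while_false e c s d :
      geval_expr e s FConv (VNat 0) d -> cogeval (CWhile e c) s FConv s d
  | G_div c s s' : cogeval c s FDiv s' FDiv.

(* A diverging run yields a co-derivation ending in ⇑ by guarded corecursion: a diverging run
   of [c1; c2] either stays inside [c1] forever, or runs [c1] to completion and then diverges in
   [c2] (a classical case split, as the two are not decidable); the terminating run of [c1] is
   turned into a ⇓-derivation by subject expansion, and the final store is arbitrary because the
   rule for ⇑ accepts every store.
   Conversely, a co-derivation from ⇓ to ⇑ can never be the skip axiom, so inverting it always
   exhibits one small step together with a co-derivation from ⇓ to ⇑ for the residual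
   configuration, which is exactly the coinduction step for divergence. *)
From mathcomp Require Import all_boot.
From mathcomp Require Import finmap.
From Stdlib Require Import Classical.

Set Implicit Arguments.
Unset Strict Implicit.
Unset Printing Implicit Defensive.
Local Open Scope fmap_scope.

Lemma geval_expr_conv e s f v d :
  geval_expr e s f v d -> f = FConv -> d = FConv /\ eval_expr e s v.
Proof.
elim=> {e s f v d} [v s|x s Hx|o e1 e2 s n1 n2 d d' _ IH1 _ IH2|s v|//] _.
- by split; constructor.
- by split; constructor.
- have [Ed Hv1] := IH1 erefl; subst d.
  have [-> Hv2] := IH2 erefl.
  by split; last exact: EE_op.
- by split; constructor.
Qed.

Lemma eval_geval_expr e s v : eval_expr e s v -> geval_expr e s FConv v FConv.
Proof. by elim=> *; econstructor; eauto. Qed.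

Ltac conv_guards :=
  repeat match goal with
  | Hg : geval_expr _ _ FConv _ _ |- _ =>
      case: (geval_expr_conv Hg erefl) => ? ?; subst; clear Hg
  end.

Lemma cogeval_div c s s' d : cogeval c s FDiv s' d -> d = FDiv.
Proof. by inversion 1. Qed.

Lemma cogeval_conv_progress c s s' d :
  cogeval c s FConv s' d ->
  [/\ c = CSkip, s' = s & d = FConv] \/
  exists c' s1, step c s c' s1 /\ cogeval c' s1 FConv s' d.
Proof.
elim: c s s' d => [|x|x e|c1 IH1 c2 _|e c1 _ c2 _|e c _] s s' d H;
  inversion H; subst; conv_guards; [by left | right ..].
- by exists CSkip, s.[x <- VNull]; split; constructor.
- by exists CSkip, s.[x <- v]; split; [exact: S_assign | constructor].
- have [[-> ? ?] | [c1' [s1 [Hst Hc1']]]] := IH1 _ _ _ ltac:(eassumption).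
  + by subst; exists c2, s; split; [constructor |].
  + exists (CSeq c1' c2), s1; split; first exact: S_seq.
    by apply: G_seq Hc1' _.
- by exists c1, s; split; first by apply: S_if_true; eassumption.
- by exists c2, s; split; first exact: S_if_false.
- exists (CSeq c (CWhile e c)), s; split; first by apply: S_while_true; eassumption.
  by apply: G_seq; eassumption.
- by exists CSkip, s'; split; [exact: S_while_false | constructor].
Qed.

Lemma cogeval_div_diverges c s s' : cogeval c s FConv s' FDiv -> diverges c s.
Proof.
move: c s; cofix CIH => c s H.
case: (cogeval_conv_progress H) => [[_ _ //] | [c' [s1 [Hst Hc']]]].
exact: Div Hst (CIH _ _ Hc').
Qed.

Inductive steps : cmd -> store -> cmd -> store -> Prop :=
  | steps_refl c s : steps c s c s
  | steps_step c s c' s' c'' s'' :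
      step c s c' s' -> steps c' s' c'' s'' -> steps c s c'' s''.

Lemma step_cogeval_conv c s c' s' s'' :
  step c s c' s' -> cogeval c' s' FConv s'' FConv -> cogeval c s FConv s'' FConv.
Proof.
move=> Hst; elim: Hst s'' => {c s c' s'}
  [x s Hx|x e s v Hx Hv|c1 c1' c2 s s' _ IH|c2 s|e c1 c2 s v Hv Hn|e c1 c2 s Hv
  |e c s v Hv Hn|e c s Hv] s'' H.
- by inversion H; apply: G_alloc.
- by inversion H; apply: G_assign Hx (eval_geval_expr Hv).
- inversion H as [| | |? ? ? s1 ? d ? Hc1 Hc2| | | | |]; subst.
  by case: d Hc1 Hc2 => [Hc1 Hc2 | _ /cogeval_div]; first exact: G_seq (IH _ Hc1) Hc2.
- by apply: G_seq H; constructor.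
- exact: G_if_true Hn (eval_geval_expr Hv) H.
- exact: G_if_false (eval_geval_expr Hv) H.
- inversion H as [| | |? ? ? s1 ? d ? Hc Hw| | | | |]; subst.
  case: d Hc Hw => [Hc Hw | _ /cogeval_div //].
  exact: G_while_true (eval_geval_expr Hv) Hn Hc Hw.
- by inversion H; subst; apply: G_while_false; apply: eval_geval_expr.
Qed.

Lemma steps_skip_cogeval_conv c s s' :
  steps c s CSkip s' -> cogeval c s FConv s' FConv.
Proof.
move Ek: CSkip => k H; elim: H Ek => [c0 s0 <-|c0 s0 c1 s1 c2 s2 Hst _ IH Ek].
- exact: G_skip.
- exact: step_cogeval_conv Hst (IH Ek).
Qed.

Lemma diverges_skip s : ~ diverges CSkip s.
Proof. by inversion 1 as [? ? c' s' Hst]; inversion Hst. Qed.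

Lemma not_diverges_step_skip c s :
  (forall c' s', step c s c' s' -> c' = CSkip) -> ~ diverges c s.
Proof.
move=> Hskip; inversion 1 as [? ? c' s' Hst Hd]; subst.
by rewrite (Hskip _ _ Hst) in Hd; apply: diverges_skip Hd.
Qed.

Lemma diverges_if e c1 c2 s : diverges (CIf e c1 c2) s ->
  (exists2 v, eval_expr e s v /\ v <> VNat 0 & diverges c1 s) \/
  eval_expr e s (VNat 0) /\ diverges c2 s.
Proof.
inversion 1 as [? ? c' s' Hst Hd]; inversion Hst; subst.
- by left; exists v.
- by right.
Qed.

Lemma diverges_while e c s : diverges (CWhile e c) s ->
  exists2 v, eval_expr e s v /\ v <> VNat 0 & diverges (CSeq c (CWhile e c)) s.
Proof.
inversion 1 as [? ? c' s' Hst Hd]; inversion Hst; subst; first by exists v.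
by case: (diverges_skip Hd).
Qed.

Lemma diverges_seq_inv c1 c2 s : diverges (CSeq c1 c2) s ->
  c1 = CSkip /\ diverges c2 s \/
  exists c1' s', step c1 s c1' s' /\ diverges (CSeq c1' c2) s'.
Proof.
inversion 1 as [? ? c' s' Hst Hd]; inversion Hst; subst.
- by right; exists c1', s'.
- by left.
Qed.

Lemma diverges_seq_left c1 c2 s : diverges (CSeq c1 c2) s ->
  ~ (exists s1, steps c1 s CSkip s1 /\ diverges c2 s1) -> diverges c1 s.
Proof.
move: c1 s; cofix CIH => c1 s H Hnot.
case: (diverges_seq_inv H) => [[Ec1 Hd] | [c1' [s' [Hst Hd]]]].
- by case: Hnot; exists s; rewrite Ec1; split; first exact: steps_refl.
- apply: (Div Hst); apply: (CIH _ _ Hd) => -[s1 [Hs1 Hd2]].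
  by apply: Hnot; exists s1; split; first exact: steps_step Hst Hs1.
Qed.

Lemma diverges_seq c1 c2 s : diverges (CSeq c1 c2) s ->
  diverges c1 s \/ exists s1, steps c1 s CSkip s1 /\ diverges c2 s1.
Proof.
move=> H; have [Hrun | Hnot] := classic (exists s1, steps c1 s CSkip s1 /\ diverges c2 s1).
- by right.
- by left; exact: diverges_seq_left H Hnot.
Qed.

Lemma diverges_cogeval_div c s : diverges c s -> forall s', cogeval c s FConv s' FDiv.
Proof.
move: c s; cofix CIH => c s H s'.
case: c H => [|x|x e|c1 c2|e c1 c2|e c] H.
1-3: by exfalso; apply: (not_diverges_step_skip _ H) => c' s1 Hst; inversion Hst.
- case: (diverges_seq H) => [H1 | [s1 [Hs1 Hd2]]].
  + exact: G_seq (CIH _ _ H1 s') (G_div _ _ _).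
  + exact: G_seq (steps_skip_cogeval_conv Hs1) (CIH _ _ Hd2 s').
- case: (diverges_if H) => [[v [Hv Hn] Hd1] | [Hv Hd2]].
  + exact: G_if_true Hn (eval_geval_expr Hv) (CIH _ _ Hd1 s').
  + exact: G_if_false (eval_geval_expr Hv) (CIH _ _ Hd2 s').
- case: (diverges_while H) => v [Hv Hn] Hd.
  case: (diverges_seq Hd) => [Hbody | [s1 [Hs1 Hloop]]].
  + exact: G_while_true (eval_geval_expr Hv) Hn (CIH _ _ Hbody s) (G_div _ _ _).
  + exact: G_while_true (eval_geval_expr Hv) Hn (steps_skip_cogeval_conv Hs1)
      (CIH _ _ Hloop s').
Qed.

Theorem theorem27 (c : cmd) (s : store) :
  diverges c s <-> (forall s' : store, cogeval c s FConv s' FDiv).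
Proof.
split; first exact: diverges_cogeval_div.
by move/(_ [fmap]); apply: cogeval_div_diverges.
Qed.
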